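(* Assume the standing setting below. Let $\alpha\in(0,1/6]$ with $\alpha n$ an integer, let $P_1\subseteq X$ with $|P_1|=\alpha n$, and let $T_\alpha\subseteq X$ be any nonempty set. Let $\mathcal{B}_a$ be a $(\phi_\alpha/15)$-linear bin division of $X$ with respect to $\mathrm{OPT}$. Suppose $n\ge\phi_\alpha/15$, that $\mathcal{B}_a$ is well-represented in $P_1$ for $X$, and that for every $i$ with $|C_i^*|\ge\phi_\alpha$, $C_i^*$ is well-represented in $P_1$ for $X$. Then $$R(X^\alpha_{\mathrm{large}},T_\alpha)\le R(X^\alpha_{\mathrm{large}},\mathrm{OPT})+\frac4\alpha\Big(R(P_1\setminus\mathcal{B}_a(1),\mathrm{OPT})+R(P_1,T_\alpha)\Big).$$
   Context: Standing setting: $(X,\rho)$ is a finite metric space with $|X|=n$; $k\ge 2$ is an integer and $\delta\in(0,1)$; $\log$ is the natural logarithm. For nonempty $T\subseteq X$, $\rho(x,T):=\min_{y\in T}\rho(x,y)$ and $R(S,T):=\sum_{x\in S}\rho(x,T)$; ties in minimizations are broken by a fixed ordering. $\mathrm{OPT}=\{c_1^*,\ldots,c_k^*\}$ is a set of at most $k$ points of $X$ minimizing $R(X,\cdot)$, and $C_i^*:=\{x\in X: i=\arg\min_{j\in[k]}\rho(c_j^*,x)\}$. For $\alpha>0$, $\phi_\alpha:=150\log(32k/\delta)/\alpha$; $X^\alpha_{\mathrm{large}}:=\bigcup\{C_i^*: |C_i^*|\ge\phi_\alpha\}$. For finite $W$, $A,B\subseteq W$, $B$ is well-represented in $A$ for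 $W$ if $|B\cap A|/|B|\in[r/2,\frac32 r]$ with $r=|A|/|W|$; a bin division is well-represented if all its bins are. A $z$-linear bin division ($z>0$) of $W$ with respect to $T$ is a partition $(\mathcal{B}(1),\ldots,\mathcal{B}(L))$ of $W$ with: (1) if $z\le|W|$, $|\mathcal{B}(i)|\ge z(i+1)/2$ for all $i$; otherwise it is trivial, $\mathcal{B}(1):=W$; (2) $|\mathcal{B}(1)|\le\frac52 z$; (3) $|\mathcal{B}(i+1)|/|\mathcal{B}(i)|\le3/2$; (4) $\rho(x,T)\ge\rho(x',T)$ whenever $x\in\mathcal{B}(i)$, $x'\in\mathcal{B}(i+1)$. *)

From HB Require Import structures.
From mathcomp Require Import all_boot all_order all_algebra.
From mathcomp Require Import reals exp.
Set Implicit Arguments. Unset Strict Implicit. Unset Printing Implicit Defensive.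
Import Order.TTheory GRing.Theory Num.Theory.
Local Open Scope ring_scope.

Section Defs.
Variables (R : realType) (T : finType).

(* rho is a metric on the finite point set T (= X). *)
Definition is_metric (rho : T -> T -> R) : Prop :=
  [/\ forall x, rho x x = 0,
      forall x y, rho x y = 0 -> x = y,
      forall x y, rho x y = rho y x &
      forall x y z, rho x z <= rho x y + rho y z].

(* rho(x,S) := min_{y in S} rho x y  (for nonempty S; 0 by convention if S is empty) *)
Definition dist (rho : T -> T -> R) (x : T) (S : {set T}) : R :=
  if [pick y in S] is Some y0 then \big[Num.min/rho x y0]_(y in S) rho x y else 0.

Definition cost (rho : T -> T -> R) (S U : {set T}) : R :=
  \sum_(x in S) dist rho x U.

Definition centers (k : nat) (c : 'I_k -> T) : {set T} := [set c j | j : 'I_k].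

(* index of the nearest center to x, ties broken by the smallest index *)
Definition nearest (rho : T -> T -> R) (k : nat) (c : 'I_k -> T) (x : T) : option 'I_k :=
  [pick j : 'I_k | [forall j' : 'I_k, rho (c j) x <= rho (c j') x]].

Definition cluster (rho : T -> T -> R) (k : nat) (c : 'I_k -> T) (i : 'I_k) : {set T} :=
  [set x | nearest rho c x == Some i].

Definition is_opt (rho : T -> T -> R) (k : nat) (c : 'I_k -> T) : Prop :=
  forall S : {set T}, S != set0 -> (#|S| <= k)%N ->
    cost rho setT (centers c) <= cost rho setT S.

Definition phi (k : nat) (delta alpha : R) : R :=
  150 * ln (32 * k%:R / delta) / alpha.

Definition Xlarge (rho : T -> T -> R) (k : nat) (c : 'I_k -> T) (delta alpha : R) : {set T} :=
  \bigcup_(i : 'I_k | phi k delta alpha <= #|cluster rho c i|%:R) cluster rho c i.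

Definition well_rep (W A B : {set T}) : Prop :=
  let r := #|A|%:R / #|W|%:R : R in
  r / 2 <= #|B :&: A|%:R / #|B|%:R <= 3 / 2 * r.

(* A z-linear bin division (B 1, ..., B L) of W w.r.t. U (bins indexed 1..L). *)
Definition linear_bin_division (rho : T -> T -> R) (z : R) (W U : {set T})
    (L : nat) (B : nat -> {set T}) : Prop :=
  [/\
      (1 <= L)%N /\
      (forall i j, (1 <= i <= L)%N -> (1 <= j <= L)%N -> i <> j -> [disjoint B i & B j]) /\
      \bigcup_(1 <= i < L.+1) B i = W,
      (if z <= #|W|%:R then forall i, (1 <= i <= L)%N -> z * ((i.+1)%:R : R) / 2 <= (#|B i|%:R : R)
       else L = 1%N /\ B 1%N = W),
      (#|B 1%N|%:R : R) <= 5 / 2 * z,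
      (forall i, (1 <= i < L)%N -> (#|B i.+1|%:R : R) / #|B i|%:R <= 3 / 2) &
      (forall i, (1 <= i < L)%N -> forall x x', x \in B i -> x' \in B i.+1 ->
         dist rho x' U <= dist rho x U)].

Definition well_rep_division (W A : {set T}) (L : nat) (B : nat -> {set T}) : Prop :=
  forall i, (1 <= i <= L)%N -> well_rep W A (B i).

End Defs.

From HB Require Import structures.
From mathcomp Require Import all_boot all_order all_algebra.
From mathcomp Require Import reals exp.
From mathcomp Require Import lra.
Set Implicit Arguments. Unset Strict Implicit. Unset Printing Implicit Defensive.
Import Order.TTheory GRing.Theory Num.Theory.
Local Open Scope ring_scope.

(* Write a := alpha/4 and, for a large cluster C_i, S_i := (C_i ∩ P1) \ B(1).
   1. Averaging (metric part): if S ⊆ C and a|C| <= |S|, then for any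
      point z,  R(C,U) <= sum_{x in C} rho(x,z) + a^-1 (sum_{y in S} rho(y,z)
      + R(S,U)), since rho(x,U) <= rho(x,z) + rho(z,y) + rho(y,U) for every
      y in S; averaging over y in S and summing over x in C gives the bound.
      Applied with z = c_i, the sums of rho(.,c_i) are OPT-costs.
   2. Counting: C_i and B(1) are well-represented in P1 with ratio alpha,
      and |B(1)| <= (5/2)(phi/15) = phi/6 <= |C_i|/6, so at most
      (3/2) alpha |B(1)| <= (alpha/4)|C_i| sample points of C_i lie in B(1),
      leaving |S_i| >= (alpha/2 - alpha/4)|C_i| = a|C_i|.
   3. Summation: the clusters are disjoint, so the cost of X_large splits
      over the large clusters; the S_i are disjoint subsets both of P1 \ B(1)
      and of P1, so their costs add up to at most those of these sets. *)

Section MetricCosts.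
Variables (R : realType) (T : finType) (rho : T -> T -> R).
Hypothesis rho_metric : is_metric rho.

(* Distances are nonnegative (from symmetry and the triangle inequality). *)
Lemma rho_ge0 x y : 0 <= rho x y.
Proof.
case: rho_metric => rho0 _ rhoC rho_tri.
have := rho_tri x y x; rewrite rho0 (rhoC y x) => h.
by rewrite -(@pmulr_rge0 _ 2) // mulr2n mulrDl !mul1r.
Qed.

Lemma dist_le x (U : {set T}) y : y \in U -> dist rho x U <= rho x y.
Proof.
move=> yU; rewrite /dist; case: pickP => [y0 _|/(_ y)]; last by rewrite yU.
by rewrite (bigD1 y) //= ge_min lexx.
Qed.

Lemma dist_attained x (U : {set T}) :
  U != set0 -> exists2 y, y \in U & dist rho x U = rho x y.
Proof.
move=> /set0Pn [y1 y1U]; rewrite /dist.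
case: pickP => [y0 y0U|/(_ y1)]; last by rewrite y1U.
apply: (big_ind (fun v => exists2 y, y \in U & v = rho x y)).
- by exists y0.
- move=> _ _ [ya ha ->] [yb hb ->].
  by rewrite /Num.min; case: ifP => _; [exists ya | exists yb].
- by move=> y yU; exists y.
Qed.

Lemma dist_ge0 x (U : {set T}) : 0 <= dist rho x U.
Proof.
have [->|/(dist_attained x) [y _ ->]] := eqVneq U set0; last exact: rho_ge0.
by rewrite /dist; case: pickP => [y|]; rewrite ?inE.
Qed.

Lemma dist_triangle x y (U : {set T}) :
  U != set0 -> dist rho x U <= rho x y + dist rho y U.
Proof.
case: rho_metric => _ _ _ rho_tri.
move=> /(dist_attained y) [t tU ->].
exact: le_trans (dist_le x tU) (rho_tri x y t).
Qed.

Lemma cost_subset (A B U : {set T}) : A \subset B -> cost rho A U <= cost rho B U.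
Proof.
move=> /subsetP sAB; rewrite /cost [X in X <= _]big_mkcond [X in _ <= X]big_mkcond.
apply: ler_sum => x _; case: ifP => [/sAB -> //|_].
by case: ifP => // _; apply: dist_ge0.
Qed.

Lemma dist_via_sample x z (S U : {set T}) :
  U != set0 -> (0 < #|S|)%N ->
  dist rho x U <= rho x z + (\sum_(y in S) rho y z + cost rho S U) / #|S|%:R.
Proof.
case: rho_metric => _ _ rhoC rho_tri.
move=> U0 S_gt0; have Sp : 0 < (#|S|%:R : R) by rewrite ltr0n.
rewrite -(ler_pM2r Sp) mulrDl divfK ?gt_eqF // !mulr_natr -!sumr_const.
rewrite /cost addrA -!big_split /=; apply: ler_sum => y _.
apply: le_trans (dist_triangle x y U0) _; rewrite lerD2r (rhoC y z); exact: rho_tri.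
Qed.

Lemma cost_via_sample (C S U : {set T}) (z : T) (a : R) :
  0 < a -> U != set0 -> S \subset C -> a * #|C|%:R <= #|S|%:R ->
  cost rho C U <=
    \sum_(x in C) rho x z + a^-1 * (\sum_(y in S) rho y z + cost rho S U).
Proof.
move=> a0 U0 sSC hS.
set G := \sum_(y in S) rho y z + cost rho S U.
have G0 : 0 <= G.
  by apply: addr_ge0; apply: sumr_ge0 => y _; [apply: rho_ge0 | apply: dist_ge0].
have [C0|] := eqVneq #|C| 0%N.
  by rewrite (cards0_eq C0) /cost !big_set0 add0r mulr_ge0 // invr_ge0 ltW.
rewrite -lt0n => C_gt0.
have Sp : 0 < (#|S|%:R : R) by apply: lt_le_trans hS; rewrite mulr_gt0 ?ltr0n.
have S_gt0 : (0 < #|S|)%N by rewrite -(ltr0n R).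
apply: le_trans (ler_sum _ (fun x _ => dist_via_sample x z U0 S_gt0)) _.
rewrite big_split /= lerD2l sumr_const -/G -[_ *+ _]mulr_natr -mulrA [X in X <= _]mulrC.
apply: ler_wpM2r => //; rewrite mulrC.
by rewrite ler_pdivrMr // -(ler_pM2l a0) mulrA mulfV ?gt_eqF // mul1r.
Qed.

Lemma cost_bigcup (I : finType) (K : pred I) (F : I -> {set T}) (U : {set T}) :
  (forall i j, i != j -> [disjoint F i & F j]) ->
  cost rho (\bigcup_(i | K i) F i) U = \sum_(i | K i) cost rho (F i) U.
Proof.
move=> disjF; pose G i := if K i then F i else set0.
have disjG i j : i != j -> [disjoint G i & G j].
  move=> ij; rewrite /G; case: (K i); case: (K j);
  by rewrite -?setI_eq0 ?set0I ?setI0 // setI_eq0; apply: disjF.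
have -> : \bigcup_(i | K i) F i = \bigcup_i G i by rewrite big_mkcond.
rewrite /cost (partition_disjoint_bigcup _ _ disjG) [RHS]big_mkcond.
by apply: eq_bigr => i _; rewrite /G; case: (K i); rewrite ?big_set0.
Qed.

Lemma sum_cost_disjoint_le (I : finType) (K : pred I) (S : I -> {set T})
    (A U : {set T}) :
  (forall i j, i != j -> [disjoint S i & S j]) -> (forall i, K i -> S i \subset A) ->
  \sum_(i | K i) cost rho (S i) U <= cost rho A U.
Proof.
move=> disjS sSA; rewrite -cost_bigcup //; apply: cost_subset.
by apply/bigcupsP.
Qed.

Section Clusters.
Variables (k : nat) (c : 'I_k -> T).

Lemma cluster_dist i x : x \in cluster rho c i -> dist rho x (centers c) = rho x (c i).
Proof.
case: rho_metric => _ _ rhoC _.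
rewrite inE /nearest; case: pickP => // j /forallP nearest_j /eqP[<-].
apply/le_anti/andP; split; first by apply: dist_le; rewrite imset_f.
have centers0 : centers c != set0 by apply/set0Pn; exists (c j); rewrite imset_f.
have [y /imsetP[j' _ ->] ->] := dist_attained x centers0.
by rewrite rhoC (rhoC x); apply: nearest_j.
Qed.

Lemma clusters_disjoint i j : i != j -> [disjoint cluster rho c i & cluster rho c j].
Proof.
move=> ij; rewrite -setI_eq0; apply/eqP/setP => x; rewrite !inE.
by case: eqP => // ->; apply/negbTE; rewrite (inj_eq (@Some_inj _)).
Qed.

Lemma cluster_cost i (A : {set T}) :
  A \subset cluster rho c i -> \sum_(x in A) rho x (c i) = cost rho A (centers c).
Proof. by move=> /subsetP sA; apply: eq_bigr => x /sA /cluster_dist ->. Qed.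

Lemma cluster_cost_via_sample i (S U : {set T}) (a : R) :
  0 < a -> U != set0 -> S \subset cluster rho c i ->
  a * #|cluster rho c i|%:R <= #|S|%:R ->
  cost rho (cluster rho c i) U <=
    cost rho (cluster rho c i) (centers c) +
    a^-1 * (cost rho S (centers c) + cost rho S U).
Proof.
move=> a0 U0 sSC hS.
by rewrite -(cluster_cost (subxx _)) -(cluster_cost sSC); apply: cost_via_sample.
Qed.

End Clusters.
End MetricCosts.

Lemma well_rep_sample (R : realType) (T : finType) (W A B C : {set T}) :
  well_rep R W A C -> well_rep R W A B -> 6 * #|B|%:R <= #|C|%:R :> R ->
  #|A|%:R / #|W|%:R / 4 * #|C|%:R <= #|(C :&: A) :\: B|%:R :> R.
Proof.
rewrite /well_rep; set r := #|A|%:R / #|W|%:R => /andP[repC _] /andP[_ repB] hBC.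
have r0 : 0 <= r by rewrite divr_ge0.
have [C0|C_gt0] := eqVneq #|C| 0%N; first by rewrite C0 mulr0.
have Cp : 0 < (#|C|%:R : R) by rewrite ltr0n lt0n.
have lowC : r / 2 * #|C|%:R <= #|C :&: A|%:R by rewrite -ler_pdivlMr.
have upB : (#|B :&: A|%:R : R) <= 3 / 2 * r * #|B|%:R.
  have [B0|B_gt0] := eqVneq #|B| 0%N.
    have := subset_leq_card (subsetIl B A); rewrite B0 leqn0 => /eqP ->.
    by rewrite mulr0.
  by rewrite -ler_pdivrMr // ltr0n lt0n.
have inB : (#|C :&: A :&: B| <= #|B :&: A|)%N.
  by apply: subset_leq_card; rewrite setIC setIS // subsetIr.
have split_card : (#|C :&: A :&: B|%:R : R) + #|C :&: A :\: B|%:R = #|C :&: A|%:R.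
  by rewrite -natrD cardsID.
have rBC : r * (6 * #|B|%:R) <= r * #|C|%:R by apply: ler_wpM2l.
move: inB; rewrite -(ler_nat R) => inB; lra.
Qed.

Lemma phi_gt0 (R : realType) (k : nat) (delta alpha : R) :
  (1 <= k)%N -> 0 < delta < 1 -> 0 < alpha -> 0 < phi k delta alpha.
Proof.
move=> k1 /andP[d0 d1] a0; rewrite /phi divr_gt0 // mulr_gt0 // ln_gt0 //.
rewrite ltr_pdivlMr // mul1r; have : 1 <= (k%:R : R) by rewrite ler1n.
lra.
Qed.

Theorem lemma12 (R : realType) (T : finType) (rho : T -> T -> R)
  (k : nat) (delta : R) (c : 'I_k -> T)
  (alpha : R) (P1 Talpha : {set T}) (L : nat) (B : nat -> {set T}) :
  is_metric rho ->
  (2 <= k)%N -> 0 < delta < 1 ->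
  is_opt rho c ->
  0 < alpha <= 1 / 6 ->
  (exists m : nat, alpha * #|T|%:R = m%:R) ->
  #|P1|%:R = alpha * #|T|%:R ->
  Talpha != set0 ->
  linear_bin_division rho (phi k delta alpha / 15) setT (centers c) L B ->
  phi k delta alpha / 15 <= #|T|%:R ->
  well_rep_division R setT P1 L B ->
  (forall i : 'I_k, phi k delta alpha <= #|cluster rho c i|%:R ->
     well_rep R setT P1 (cluster rho c i)) ->
  cost rho (Xlarge rho c delta alpha) Talpha <=
    cost rho (Xlarge rho c delta alpha) (centers c)
    + 4 / alpha * (cost rho (P1 :\: B 1%N) (centers c) + cost rho P1 Talpha).
Proof.
move=> hm k2 hdelta _ /andP[a0 _] _ hP1 Ta0 [[L1 _] _ B1_small _ _] hzT repB repC.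
set ph := phi k delta alpha; set a := alpha / 4.
have a_gt0 : 0 < a by rewrite divr_gt0.
have ph0 : 0 < ph by apply: phi_gt0 => //; apply: ltnW.
have ratio : #|P1|%:R / #|[set: T]|%:R = alpha.
  have N0 : 0 < (#|T|%:R : R) by apply: lt_le_trans hzT; rewrite divr_gt0.
  by rewrite cardsT hP1 mulfK ?gt_eqF.
pose S i := (cluster rho c i :&: P1) :\: B 1%N.
have S_sub i : S i \subset cluster rho c i by rewrite subDset subsetU // subsetIl orbT.
have S_disj i j : i != j -> [disjoint S i & S j].
  by move=> ij; apply: disjointW (S_sub i) (S_sub j) (clusters_disjoint rho c ij).
(* Step 2: |B(1)| <= phi/6, so S_i is an (alpha/4)-fraction of a large C_i^*. *)
have S_large i : ph <= #|cluster rho c i|%:R -> a * #|cluster rho c i|%:R <= #|S i|%:R.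
  move=> large_i; have := well_rep_sample (repC i large_i) (repB 1%N L1).
  by rewrite ratio; apply; rewrite -/ph in B1_small; lra.
rewrite /Xlarge !(cost_bigcup _ _ _ (clusters_disjoint rho c)).
apply: le_trans (ler_sum _ (fun i large_i =>
  cluster_cost_via_sample hm a_gt0 Ta0 (S_sub i) (S_large i large_i))) _.
rewrite big_split /= lerD2l -mulr_sumr invf_div ler_wpM2l ?divr_ge0 ?(ltW a0) //.
rewrite big_split /=; apply: lerD; apply: sum_cost_disjoint_le => // i _.
  by apply: setSD; apply: subsetIr.
by rewrite /S subDset subsetU // subsetIr orbT.
Qed.
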